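(* For every finite set $\Gamma$ of IPL formulas and every IPL formula $\varphi$: $\Gamma \Vdash^{*} \varphi$ if and only if $\Gamma \vdash \varphi$ (i.e., $\varphi$ is derivable from $\Gamma$ in intuitionistic propositional logic).
   Context: Fix a denumerable set $\mathbb{A}$ of atoms. IPL formulas are built from atoms and $\bot$ using $\wedge,\vee,\to$. An atomic rule has the form $(Q_1\triangleright q_1,\dots,Q_n\triangleright q_n)\Rightarrow q$ with $n\ge 0$, $q,q_i\in\mathbb{A}$ and $Q_i$ finite (possibly empty) sets of atoms. A base is a set of atomic rules; $\mathscr{C}\supseteq\mathscr{B}$ means $\mathscr{C}$ extends $\mathscr{B}$. Derivability $\vdash_{\mathscr{B}}$ (between finite sets of atoms and atoms) is the least relation such that $S\cup\{q\}\vdash_{\mathscr{B}} q$, and if $(Q_1\triangleright q_1,\dots,Q_n\triangleright q_n)\Rightarrow q\in\mathscr{B}$ and $S\cup Q_i\vdash_{\mathscr{B}} q_i$ for all $i$, then $S\vdash_{\mathscr{B}} q$. The relation $\Vdash^{*}_{\mathscr{B}}$ is defined inductively by: (At) $\Vdash^{*}_{\mathscr{B}} p$ iff $\emptyset\vdash_{\mathscr{B}} p$; ($\to$) $\Vdash^{*}_{\mathscr{B}}\varphi\to\psi$ iff $\varphi\Vdash^{*}_{\mathscr{B}}\psi$; ($\wedge^*$) $\Vdash^{*}_{\mathscr{B}}\varphi\wedge\psi$ iff for every $\mathscr{C}\supseteq\mathscr{B}$ and every atom $p$, if $\varphi,\psi\Vdash^{*}_{\mathscr{C}} p$ then $\Vdash^{*}_{\mathscr{C}}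 p$; ($\vee$) $\Vdash^{*}_{\mathscr{B}}\varphi\vee\psi$ iff for every $\mathscr{C}\supseteq\mathscr{B}$ and every atom $p$, if $\varphi\Vdash^{*}_{\mathscr{C}} p$ and $\psi\Vdash^{*}_{\mathscr{C}} p$ then $\Vdash^{*}_{\mathscr{C}} p$; ($\bot$) $\Vdash^{*}_{\mathscr{B}}\bot$ iff $\Vdash^{*}_{\mathscr{B}} p$ for every atom $p$; (Inf) for nonempty finite $\Gamma$, $\Gamma\Vdash^{*}_{\mathscr{B}}\varphi$ iff for every $\mathscr{C}\supseteq\mathscr{B}$, if $\Vdash^{*}_{\mathscr{C}}\psi$ for all $\psi\in\Gamma$ then $\Vdash^{*}_{\mathscr{C}}\varphi$ (for empty $\Gamma$, $\Gamma\Vdash^{*}_{\mathscr{B}}\varphi$ means $\Vdash^{*}_{\mathscr{B}}\varphi$). Finally $\Gamma\Vdash^{*}\varphi$ iff $\Gamma\Vdash^{*}_{\mathscr{B}}\varphi$ for every base $\mathscr{B}$. *)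

(* Base-extension semantics (Sandqvist-style, with the
   modified conjunction clause ∧* ) for intuitionistic propositional logic. *)
From Stdlib Require Import List.
Import ListNotations.

Definition atom := nat.

Inductive form : Type :=
| Atom : atom -> form
| Bot : form
| And : form -> form -> form
| Or : form -> form -> form
| Imp : form -> form -> form.

(* An atomic rule (Q_1 |> q_1, ..., Q_n |> q_n) => q ; finite sets as lists. *)
Record rule : Type := mkRule {
  premises : list (list atom * atom);
  conclusion : atom
}.

Definition base := rule -> Prop.

Definition extends (C B : base) : Prop := forall r, B r -> C r.

Inductive derivable (B : base) : list atom -> atom -> Prop :=
| der_ref : forall S q, In q S -> derivable B S q
| der_rule : forall S r, B r ->
    (forall Q qi, In (Q, qi) (premises r) -> derivable B (S ++ Q) qi) ->
    derivable B S (conclusion r).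

Fixpoint supp (phi : form) (B : base) {struct phi} : Prop :=
  match phi with
  | Atom p => derivable B [] p
  | Bot => forall p, derivable B [] p
  | Imp a b =>
      (* a ||-*_B b, via (Inf) with Gamma = {a} *)
      forall C, extends C B -> supp a C -> supp b C
  | And a b =>
      forall C, extends C B -> forall p : atom,
        (forall D, extends D C -> supp a D -> supp b D -> derivable D [] p) ->
        derivable C [] p
  | Or a b =>
      forall C, extends C B -> forall p : atom,
        (forall D, extends D C -> supp a D -> derivable D [] p) ->
        (forall D, extends D C -> supp b D -> derivable D [] p) ->
        derivable C [] p
  end.

Definition supp_ctx (Gamma : list form) (B : base) (phi : form) : Prop :=
  match Gamma with
  | [] => supp phi B
  | _ :: _ => forall C, extends C B -> (forall psi, In psi Gamma -> supp psi C) -> supp phi C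
  end.

Definition valid (Gamma : list form) (phi : form) : Prop :=
  forall B : base, supp_ctx Gamma B phi.

Inductive nd : list form -> form -> Prop :=
| nd_ax : forall G a, In a G -> nd G a
| nd_botE : forall G a, nd G Bot -> nd G a
| nd_andI : forall G a b, nd G a -> nd G b -> nd G (And a b)
| nd_andE1 : forall G a b, nd G (And a b) -> nd G a
| nd_andE2 : forall G a b, nd G (And a b) -> nd G b
| nd_orI1 : forall G a b, nd G a -> nd G (Or a b)
| nd_orI2 : forall G a b, nd G b -> nd G (Or a b)
| nd_orE : forall G a b c, nd G (Or a b) -> nd (a :: G) c -> nd (b :: G) c -> nd G c
| nd_impI : forall G a b, nd (a :: G) b -> nd G (Imp a b)
| nd_impE : forall G a b, nd G (Imp a b) -> nd G a -> nd G b.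

From Stdlib Require Import List Lia Cantor ClassicalEpsilon.
Import ListNotations.

(* Support is monotone along base extensions, and every formula is
   "locally supported": if a predicate P covers a base B (every atom derivable
   in all P-extensions of every extension of B is already derivable there) and
   c is supported wherever P holds, then c is supported in B.  The elimination
   rules for ⊥, ∧ and ∨ are instances of this, and the remaining natural
   deduction rules are direct consequences of the clauses.

   Given Γ and φ, fix a bound M above all their atoms and let
   every formula f over atoms < M be named by an atom [at_of M f] (atoms name
   themselves, compound formulas get injective codes >= M).  The base
   [nd_base M] contains atomic versions of the natural deduction rules over
   these names.  In every extension of it, supporting f is the same as deriving
   its name; hence validity gives a derivation of the name of φ from the names
   of Γ in [nd_base M], which decodes rule by rule into a natural deduction
   proof of Γ ⊢ φ. *)

Lemma extends_refl (B : base) : extends B B.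
Proof. intros r H; exact H. Qed.

Lemma extends_trans {A B C : base} : extends C B -> extends B A -> extends C A.
Proof. intros HCB HBA r H; auto. Qed.

Lemma derivable_mono (B C : base) (S : list atom) (p : atom) :
  derivable B S p -> extends C B -> derivable C S p.
Proof.
  induction 1 as [S q Hin | S r Hr _ IH]; intros HCB.
  - now apply der_ref.
  - apply der_rule; auto.
Qed.

Lemma supp_mono (a : form) : forall B C, supp a B -> extends C B -> supp a C.
Proof.
  induction a; simpl; intros B C H HCB.
  - eapply derivable_mono; eauto.
  - intros p; eapply derivable_mono; eauto.
  - intros D HDC; apply H, (extends_trans HDC HCB).
  - intros D HDC; apply H, (extends_trans HDC HCB).
  - intros D HDC; apply H, (extends_trans HDC HCB).
Qed.

(* [P] covers [B]: an atom derivable in every P-extension of an extension C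
   of B is derivable in C.  The ∧*, ∨ and ⊥ clauses all say that some P
   covers the base. *)
Definition covers (P : base -> Prop) (B : base) : Prop :=
  forall C, extends C B -> forall p : atom,
    (forall D, extends D C -> P D -> derivable D [] p) -> derivable C [] p.

Lemma covers_mono (P : base -> Prop) (B C : base) :
  covers P B -> extends C B -> covers P C.
Proof. intros H HCB D HDC; apply H, (extends_trans HDC HCB). Qed.

Lemma supp_covered (c : form) : forall (P : base -> Prop) (B : base),
  covers P B -> (forall D, extends D B -> P D -> supp c D) -> supp c B.
Proof.
  induction c as [q| |a _ b _|a _ b _|a _ b IHb]; intros P B Hcov Hc; simpl.
  - apply (Hcov B (extends_refl B)); exact Hc.
  - intros q; apply (Hcov B (extends_refl B)); intros D HD PD; exact (Hc D HD PD q).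
  - intros C HC p K; apply (Hcov C HC p); intros D HD PD.
    apply (Hc D (extends_trans HD HC) PD D (extends_refl D)).
    intros E HE; apply K, (extends_trans HE HD).
  - intros C HC p K1 K2; apply (Hcov C HC p); intros D HD PD.
    apply (Hc D (extends_trans HD HC) PD D (extends_refl D));
      intros E HE; [apply K1 | apply K2]; exact (extends_trans HE HD).
  - intros C HC Ha; apply (IHb P C (covers_mono _ _ _ Hcov HC)); intros D HD PD.
    apply (Hc D (extends_trans HD HC) PD D (extends_refl D)).
    exact (supp_mono _ _ _ Ha HD).
Qed.

Lemma supp_bot_elim (c : form) (B : base) : supp Bot B -> supp c B.
Proof.
  intros H; apply (supp_covered c (fun _ => False) B); [|tauto].
  intros C HC p _; exact (derivable_mono _ _ _ _ (H p) HC).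
Qed.

Lemma supp_and_iff (a b : form) (B : base) :
  supp (And a b) B <-> supp a B /\ supp b B.
Proof.
  split.
  - intros H; split; apply (supp_covered _ (fun D => supp a D /\ supp b D));
      try tauto; intros C HC p K; apply (H C HC p); auto.
  - intros [Ha Hb] C HC p K; apply (K C (extends_refl C));
      eapply supp_mono; eauto.
Qed.

Lemma supp_or_elim (a b c : form) (B : base) : supp (Or a b) B ->
  (forall D, extends D B -> supp a D -> supp c D) ->
  (forall D, extends D B -> supp b D -> supp c D) -> supp c B.
Proof.
  intros H K1 K2; apply (supp_covered c (fun D => supp a D \/ supp b D)).
  - intros C HC p K; apply (H C HC p); auto.
  - intros D HD [Ha|Hb]; auto.
Qed.

(** * Soundness *)

Definition supp_all (G : list form) (B : base) : Prop :=
  forall psi, In psi G -> supp psi B.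

Lemma supp_all_cons (G : list form) (a : form) (B D : base) :
  supp_all G B -> extends D B -> supp a D -> supp_all (a :: G) D.
Proof. intros HG HDB Ha psi [<-|Hin]; [exact Ha | eapply supp_mono; eauto]. Qed.

Lemma valid_iff (G : list form) (phi : form) :
  valid G phi <-> (forall B, supp_all G B -> supp phi B).
Proof.
  unfold valid, supp_ctx, supp_all; split; intros H B.
  - destruct G; intros HG; [apply H | apply (H B B (extends_refl B) HG)].
  - destruct G as [|x G]; [apply H; intros _ [] | intros C _; apply H].
Qed.

Lemma soundness (G : list form) (a : form) :
  nd G a -> forall B, supp_all G B -> supp a B.
Proof.
  induction 1 as [G a Hin|G a _ IH|G a b _ IHa _ IHb|G a b _ IH|G a b _ IH
                 |G a b _ IH|G a b _ IH|G a b c _ IH _ IHa _ IHb|G a b _ IH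
                 |G a b _ IHab _ IHa]; intros B HB.
  - exact (HB a Hin).
  - exact (supp_bot_elim a B (IH B HB)).
  - apply supp_and_iff; auto.
  - exact (proj1 (proj1 (supp_and_iff a b B) (IH B HB))).
  - exact (proj2 (proj1 (supp_and_iff a b B) (IH B HB))).
  - intros C HC p K _; apply (K C (extends_refl C)); eapply supp_mono; eauto.
  - intros C HC p _ K; apply (K C (extends_refl C)); eapply supp_mono; eauto.
  - apply (supp_or_elim a b c B (IH B HB)); intros D HD Hab;
      [apply IHa | apply IHb]; exact (supp_all_cons _ _ _ _ HB HD Hab).
  - intros C HC Ha; apply IH; exact (supp_all_cons _ _ _ _ HB HC Ha).
  - exact (IHab B HB B (extends_refl B) (IHa B HB)).
Qed.

Lemma nd_weaken (G : list form) (a : form) :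
  nd G a -> forall G', incl G G' -> nd G' a.
Proof.
  induction 1; intros G' HG.
  - apply nd_ax; auto.
  - apply nd_botE; auto.
  - apply nd_andI; auto.
  - eapply nd_andE1; eauto.
  - eapply nd_andE2; eauto.
  - apply nd_orI1; auto.
  - apply nd_orI2; auto.
  - eapply nd_orE; [apply IHnd1 | apply IHnd2 | apply IHnd3];
      auto using incl_cons, in_eq, incl_tl.
  - apply nd_impI, IHnd; auto using incl_cons, in_eq, incl_tl.
  - eapply nd_impE; eauto.
Qed.

Lemma nd_snoc (G : list form) (a c : form) : nd (G ++ [a]) c -> nd (a :: G) c.
Proof.
  intros H; apply (nd_weaken _ _ H); intros x Hx.
  apply in_app_or in Hx; simpl; destruct Hx as [Hx|[<-|[]]]; auto.
Qed.

Lemma derivable_rule1 (C : base) (S Q1 : list atom) (q1 c : atom) :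
  C (mkRule [(Q1, q1)] c) -> derivable C (S ++ Q1) q1 -> derivable C S c.
Proof.
  intros Hr H1; apply (der_rule C S _ Hr).
  intros Q q [E|[]]; injection E as <- <-; exact H1.
Qed.

Lemma derivable_rule2 (C : base) (S Q1 Q2 : list atom) (q1 q2 c : atom) :
  C (mkRule [(Q1, q1); (Q2, q2)] c) ->
  derivable C (S ++ Q1) q1 -> derivable C (S ++ Q2) q2 -> derivable C S c.
Proof.
  intros Hr H1 H2; apply (der_rule C S _ Hr).
  intros Q q [E|[E|[]]]; injection E as <- <-; assumption.
Qed.

Lemma derivable_rule3 (C : base) (S Q1 Q2 Q3 : list atom) (q1 q2 q3 c : atom) :
  C (mkRule [(Q1, q1); (Q2, q2); (Q3, q3)] c) ->
  derivable C (S ++ Q1) q1 -> derivable C (S ++ Q2) q2 ->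
  derivable C (S ++ Q3) q3 -> derivable C S c.
Proof.
  intros Hr H1 H2 H3; apply (der_rule C S _ Hr).
  intros Q q [E|[E|[E|[]]]]; injection E as <- <-; assumption.
Qed.

Definition add_axioms (C : base) (A : list atom) : base :=
  fun r => C r \/ (premises r = [] /\ In (conclusion r) A).

Lemma add_axioms_extends (C : base) (A : list atom) : extends (add_axioms C A) C.
Proof. intros r H; left; exact H. Qed.

Lemma add_axioms_derivable (C : base) (A : list atom) (q : atom) :
  In q A -> derivable (add_axioms C A) [] q.
Proof.
  intros H; apply (der_rule _ [] (mkRule [] q)); [right; simpl; auto | intros Q qi []].
Qed.

Lemma discharge_axioms (C : base) (A S : list atom) (p : atom) :
  derivable (add_axioms C A) S p -> derivable C (A ++ S) p.
Proof.
  induction 1 as [S q Hin | S r [Hr|[_ Hr]] _ IH].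
  - apply der_ref, in_or_app; auto.
  - apply der_rule; auto; intros Q qi Hi; rewrite <- app_assoc; auto.
  - apply der_ref, in_or_app; auto.
Qed.

Fixpoint enc (f : form) : nat :=
  match f with
  | Atom p => to_nat (0, p)
  | Bot => to_nat (1, 0)
  | And a b => to_nat (2, to_nat (enc a, enc b))
  | Or a b => to_nat (3, to_nat (enc a, enc b))
  | Imp a b => to_nat (4, to_nat (enc a, enc b))
  end.

Lemma to_nat_tagged_inj (n m x y x' y' : nat) :
  to_nat (n, to_nat (x, y)) = to_nat (m, to_nat (x', y')) -> n = m /\ x = x' /\ y = y'.
Proof.
  intros H; apply to_nat_inj in H.
  pose proof (to_nat_inj _ _ (f_equal snd H)) as E; cbn [snd] in E.
  split; [exact (f_equal fst H) | split; [exact (f_equal fst E) | exact (f_equal snd E)]].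
Qed.

Lemma enc_inj (a b : form) : enc a = enc b -> a = b.
Proof.
  revert b; induction a; destruct b; intros H; cbn [enc] in H; try reflexivity;
    try (apply to_nat_inj in H; injection H; intros; subst; reflexivity);
    try (apply to_nat_inj in H; discriminate);
    apply to_nat_tagged_inj in H; destruct H as [E [E1 E2]];
    try discriminate; f_equal; auto.
Qed.

Fixpoint maxat (f : form) : nat :=
  match f with
  | Atom p => p
  | Bot => 0
  | And a b | Or a b | Imp a b => Nat.max (maxat a) (maxat b)
  end.

(** * The canonical base for formulas over atoms below [M] *)

Section CanonicalBase.

Variable M : nat.

Fixpoint bnd (f : form) : Prop :=
  match f with
  | Atom p => p < M
  | Bot => True
  | And a b | Or a b | Imp a b => bnd a /\ bnd b
  end.

Lemma bnd_maxat (f : form) : maxat f < M -> bnd f.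
Proof. induction f; simpl; intros; try split; try apply IHf1; try apply IHf2; auto; lia. Qed.

Definition at_of (f : form) : atom :=
  match f with Atom p => p | _ => M + enc f end.

Lemma at_of_inj (a b : form) : bnd a -> bnd b -> at_of a = at_of b -> a = b.
Proof.
  intros Ha Hb H; destruct a; destruct b; unfold at_of in H; cbn [bnd] in *;
    try (subst; reflexivity); try lia; apply enc_inj; lia.
Qed.

Definition form_of (q : atom) : form :=
  epsilon (inhabits Bot) (fun f => bnd f /\ at_of f = q).

Lemma form_of_at_of (f : form) : bnd f -> form_of (at_of f) = f.
Proof.
  intros Hf; unfold form_of.
  destruct (epsilon_spec (inhabits Bot) (fun g => bnd g /\ at_of g = at_of f))
    as [Hg Eg]; [eauto | exact (at_of_inj _ _ Hg Hf Eg)].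
Qed.

Lemma map_form_of_at_of (G : list form) :
  (forall f, In f G -> bnd f) -> map form_of (map at_of G) = G.
Proof.
  intros HG; rewrite map_map, <- map_id; apply map_ext_in.
  intros f Hf; exact (form_of_at_of f (HG f Hf)).
Qed.

Inductive nd_base : rule -> Prop :=
| rAndI a b : bnd a -> bnd b -> nd_base (mkRule [([], at_of a); ([], at_of b)] (at_of (And a b)))
| rAndE1 a b : bnd a -> bnd b -> nd_base (mkRule [([], at_of (And a b))] (at_of a))
| rAndE2 a b : bnd a -> bnd b -> nd_base (mkRule [([], at_of (And a b))] (at_of b))
| rOrI1 a b : bnd a -> bnd b -> nd_base (mkRule [([], at_of a)] (at_of (Or a b)))
| rOrI2 a b : bnd a -> bnd b -> nd_base (mkRule [([], at_of b)] (at_of (Or a b)))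
| rOrE a b p : bnd a -> bnd b ->
    nd_base (mkRule [([], at_of (Or a b)); ([at_of a], p); ([at_of b], p)] p)
| rImpI a b : bnd a -> bnd b -> nd_base (mkRule [([at_of a], at_of b)] (at_of (Imp a b)))
| rImpE a b : bnd a -> bnd b ->
    nd_base (mkRule [([], at_of (Imp a b)); ([], at_of a)] (at_of b))
| rBot p : nd_base (mkRule [([], at_of Bot)] p).

Definition represents (f : form) : Prop :=
  forall C, extends C nd_base -> (supp f C <-> derivable C [] (at_of f)).

Lemma derivable_from_name (a : form) (C : base) (p : atom) :
  represents a -> extends C nd_base ->
  (forall D, extends D C -> supp a D -> derivable D [] p) -> derivable C [at_of a] p.
Proof.
  intros Ra HC K; apply (discharge_axioms C [at_of a] []).
  pose proof (add_axioms_extends C [at_of a]) as HE.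
  apply (K _ HE), (Ra _ (extends_trans HE HC)), add_axioms_derivable; simpl; auto.
Qed.

Lemma represents_atom (p : atom) : represents (Atom p).
Proof. intros C _; simpl; tauto. Qed.

Lemma represents_bot : represents Bot.
Proof.
  intros C HC; simpl; split; intros H; [apply H|].
  intros p; exact (derivable_rule1 C [] [] _ _ (HC _ (rBot p)) H).
Qed.

Lemma represents_and (a b : form) : bnd a -> bnd b ->
  represents a -> represents b -> represents (And a b).
Proof.
  intros Ha Hb Ra Rb C HC; rewrite supp_and_iff, (Ra C HC), (Rb C HC); split.
  - intros [Da Db]; exact (derivable_rule2 C [] [] [] _ _ _ (HC _ (rAndI a b Ha Hb)) Da Db).
  - intros H; split; [apply (derivable_rule1 C [] [] _ _ (HC _ (rAndE1 a b Ha Hb)))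
                     |apply (derivable_rule1 C [] [] _ _ (HC _ (rAndE2 a b Ha Hb)))]; exact H.
Qed.

Lemma represents_or (a b : form) : bnd a -> bnd b ->
  represents a -> represents b -> represents (Or a b).
Proof.
  intros Ha Hb Ra Rb C HC; split.
  - intros H; apply (H C (extends_refl C)); intros D HD S; pose proof (extends_trans HD HC) as HDN.
    + apply (derivable_rule1 D [] [] _ _ (HDN _ (rOrI1 a b Ha Hb))), (Ra D HDN), S.
    + apply (derivable_rule1 D [] [] _ _ (HDN _ (rOrI2 a b Ha Hb))), (Rb D HDN), S.
  - intros H D HD p K1 K2; pose proof (extends_trans HD HC) as HDN.
    apply (derivable_rule3 D [] _ _ _ _ _ _ _ (HDN _ (rOrE a b p Ha Hb))).
    + exact (derivable_mono _ _ _ _ H HD).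
    + exact (derivable_from_name a D p Ra HDN K1).
    + exact (derivable_from_name b D p Rb HDN K2).
Qed.

Lemma represents_imp (a b : form) : bnd a -> bnd b ->
  represents a -> represents b -> represents (Imp a b).
Proof.
  intros Ha Hb Ra Rb C HC; split.
  - intros H; apply (derivable_rule1 C [] _ _ _ (HC _ (rImpI a b Ha Hb))).
    apply (derivable_from_name a C _ Ra HC); intros D HD S.
    exact (proj1 (Rb D (extends_trans HD HC)) (H D HD S)).
  - intros H D HD S; pose proof (extends_trans HD HC) as HDN.
    apply (Rb D HDN), (derivable_rule2 D [] [] [] _ _ _ (HDN _ (rImpE a b Ha Hb))).
    + exact (derivable_mono _ _ _ _ H HD).
    + exact (proj1 (Ra D HDN) S).
Qed.

Lemma supp_iff_derivable (f : form) : bnd f -> represents f.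
Proof.
  induction f as [p| |a IHa b IHb|a IHa b IHb|a IHa b IHb]; simpl; intros Hf.
  - apply represents_atom.
  - apply represents_bot.
  - apply represents_and; tauto.
  - apply represents_or; tauto.
  - apply represents_imp; tauto.
Qed.

Lemma nd_base_sound (r : rule) : nd_base r -> forall G : list form,
  (forall Q q, In (Q, q) (premises r) -> nd (G ++ map form_of Q) (form_of q)) ->
  nd G (form_of (conclusion r)).
Proof.
  intros Hr G H; destruct Hr; pose proof (H _ _ (or_introl eq_refl)) as P1;
    cbn [premises conclusion map] in *;
    rewrite ?app_nil_r in *;
    repeat rewrite form_of_at_of in * by (cbn [bnd]; auto).
  - pose proof (H _ _ (or_intror (or_introl eq_refl))) as P2.
    rewrite app_nil_r, form_of_at_of in P2 by auto; apply nd_andI; auto.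
  - exact (nd_andE1 _ _ _ P1).
  - exact (nd_andE2 _ _ _ P1).
  - apply nd_orI1; auto.
  - apply nd_orI2; auto.
  - pose proof (H _ _ (or_intror (or_introl eq_refl))) as P2.
    pose proof (H _ _ (or_intror (or_intror (or_introl eq_refl)))) as P3.
    cbn [map] in P2, P3; rewrite form_of_at_of in P2, P3 by auto.
    exact (nd_orE _ _ _ _ P1 (nd_snoc _ _ _ P2) (nd_snoc _ _ _ P3)).
  - apply nd_impI, nd_snoc; exact P1.
  - pose proof (H _ _ (or_intror (or_introl eq_refl))) as P2.
    rewrite app_nil_r, form_of_at_of in P2 by auto; exact (nd_impE _ _ _ P1 P2).
  - exact (nd_botE _ _ P1).
Qed.

Lemma derivable_nd (S : list atom) (p : atom) :
  derivable nd_base S p -> nd (map form_of S) (form_of p).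
Proof.
  induction 1 as [S q Hin | S r Hr _ IH].
  - apply nd_ax, in_map; exact Hin.
  - apply (nd_base_sound r Hr); intros Q q Hq; rewrite <- map_app; auto.
Qed.

End CanonicalBase.

Lemma completeness (G : list form) (phi : form) : valid G phi -> nd G phi.
Proof.
  intros H; rewrite valid_iff in H.
  set (M := S (list_max (map maxat (phi :: G)))).
  assert (Hb : forall f, In f (phi :: G) -> bnd M f).
  { intros f Hf; apply bnd_maxat; unfold M.
    assert (Hle := proj1 (list_max_le _ _) (le_n (list_max (map maxat (phi :: G))))).
    rewrite Forall_forall in Hle; specialize (Hle _ (in_map maxat _ _ Hf)); lia. }
  set (C := add_axioms (nd_base M) (map (at_of M) G)).
  assert (HC : extends C (nd_base M)) by apply add_axioms_extends.
  assert (Hsupp : supp phi C).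
  { apply H; intros psi Hpsi.
    apply (supp_iff_derivable M psi (Hb psi (or_intror Hpsi)) C HC).
    apply add_axioms_derivable, in_map; exact Hpsi. }
  apply (supp_iff_derivable M phi (Hb phi (or_introl eq_refl)) C HC),
        discharge_axioms, derivable_nd in Hsupp.
  rewrite app_nil_r, map_form_of_at_of, form_of_at_of in Hsupp;
    auto using in_eq, in_cons.
Qed.

Theorem theorem2 : forall (Gamma : list form) (phi : form),
  valid Gamma phi <-> nd Gamma phi.
Proof.
  intros Gamma phi; split.
  - apply completeness.
  - intros H; apply valid_iff, soundness, H.
Qed.
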